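(* Let $\langle x_n\rangle$ be a cofinally Bourbaki quasi-Cauchy sequence of distinct terms in a metric space $\langle X,d\rangle$. Then there exists a pairwise disjoint family $\{M_j: j\in\mathbb{N}\}$ of infinite subsets of $\mathbb{N}$ such that for every $j\in\mathbb{N}$ and all $i,\ell\in M_j$, the points $x_i$ and $x_\ell$ can be joined by a $\frac1j$-chain.
   Context: For $\varepsilon>0$, an $\varepsilon$-chain joining $x,y\in X$ is a finite sequence $x=u_0,u_1,\dots,u_n=y$ in $X$ with $d(u_{i-1},u_i)<\varepsilon$ for all $i$. A sequence $\langle x_n\rangle$ in $X$ is cofinally Bourbaki quasi-Cauchy if for every $\varepsilon>0$ there is an infinite set $N_\varepsilon\subseteq\mathbb{N}$ such that for all $j,k\in N_\varepsilon$, $x_j$ and $x_k$ can be joined by an $\varepsilon$-chain. *)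

From Stdlib Require Import Reals.
Open Scope R_scope.

Record is_metric (X : Type) (d : X -> X -> R) : Prop := {
  metric_nonneg : forall x y, 0 <= d x y;
  metric_zero_iff : forall x y, d x y = 0 <-> x = y;
  metric_sym : forall x y, d x y = d y x;
  metric_triangle : forall x y z, d x z <= d x y + d y z
}.

Definition eps_chain {X : Type} (d : X -> X -> R) (eps : R) (x y : X) : Prop :=
  exists (n : nat) (u : nat -> X),
    u 0%nat = x /\ u n = y /\
    (forall i : nat, (i < n)%nat -> d (u i) (u (S i)) < eps).

Definition infinite_nat (A : nat -> Prop) : Prop :=
  forall m : nat, exists n : nat, (m <= n)%nat /\ A n.

Definition cofinally_BQC {X : Type} (d : X -> X -> R) (x : nat -> X) : Prop :=
  forall eps : R, 0 < eps ->
    exists N : nat -> Prop, infinite_nat N /\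
      (forall j k : nat, N j -> N k -> eps_chain d eps (x j) (x k)).

(* For each j the cofinal Bourbaki quasi-Cauchy property yields an infinite
   set N_j of indices whose terms are pairwise joined by 1/j-chains.  These
   sets are then shrunk to pairwise disjoint infinite subsets by a diagonal
   selection: enumerate the indices j so that each one recurs infinitely
   often, and pick a strictly increasing sequence a_p with a_p in N_j for
   the p-th enumerated j. *)

From Stdlib Require Import Reals.
From Stdlib Require Import Lia Lra ClassicalEpsilon.
Open Scope R_scope.

Section StrictlyIncreasing.

Variable a : nat -> nat.
Hypothesis a_incr : forall p, (a p < a (S p))%nat.

Lemma increasing_lt p q : (p < q)%nat -> (a p < a q)%nat.
Proof.
  intro Hpq; induction Hpq as [|q _ IH].
  - apply a_incr.
  - specialize (a_incr q); lia.
Qed.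

Lemma increasing_injective p q : a p = a q -> p = q.
Proof.
  intro Hpq.
  destruct (Nat.lt_trichotomy p q) as [Hlt|[Heq|Hlt]]; auto;
    apply increasing_lt in Hlt; lia.
Qed.

Lemma increasing_ge_id p : (p <= a p)%nat.
Proof.
  induction p as [|p IH]; [lia|].
  specialize (a_incr p); lia.
Qed.

End StrictlyIncreasing.

Lemma increasing_selection (P : nat -> nat -> Prop)
  (HP : forall p, infinite_nat (P p)) :
  exists a : nat -> nat,
    (forall p, (a p < a (S p))%nat) /\ (forall p, P p (a p)).
Proof.
  destruct (choice (fun pm n => (snd pm <= n)%nat /\ P (fst pm) n))
    as [next Hnext].
  { intros [p m]; apply HP. }
  pose (a := fix a p :=
         match p with O => next (O, O) | S q => next (S q, S (a q)) end).
  exists a; split.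
  - intro p; exact (proj1 (Hnext (S p, S (a p)))).
  - intros [|p].
    + exact (proj2 (Hnext (O, O))).
    + exact (proj2 (Hnext (S p, S (a p)))).
Qed.

Definition diag_index (p : nat) : nat := (p - Nat.sqrt p * Nat.sqrt p)%nat.

(* Every j is hit at p = s^2 + j for each s >= j, since then sqrt p = s. *)
Lemma infinite_diag_index_fiber (j : nat) :
  infinite_nat (fun p => diag_index p = j).
Proof.
  intro m; exists ((j + m) * (j + m) + j)%nat; split; [nia|].
  unfold diag_index.
  rewrite (Nat.sqrt_unique _ (j + m)); [lia | split; nia].
Qed.

Lemma disjoint_infinite_refinement (G : nat -> nat -> Prop)
  (HG : forall j, infinite_nat (G j)) :
  exists M : nat -> nat -> Prop,
    (forall j k, j <> k -> forall n, ~ (M j n /\ M k n)) /\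
    (forall j, infinite_nat (M j)) /\
    (forall j n, M j n -> G j n).
Proof.
  destruct (increasing_selection (fun p => G (diag_index p))) as [a [Ha HaG]].
  { intro p; apply HG. }
  exists (fun j n => exists p, diag_index p = j /\ a p = n).
  split; [|split].
  - intros j k Hjk n [[p [<- <-]] [q [<- Hq]]].
    apply Hjk; f_equal; symmetry; exact (increasing_injective a Ha q p Hq).
  - intros j m.
    destruct (infinite_diag_index_fiber j m) as [p [Hmp Hp]].
    exists (a p); split; [pose proof (increasing_ge_id a Ha p); lia | eauto].
  - intros j n [p [<- <-]]; apply HaG.
Qed.

Lemma cofinally_BQC_chain_sets {X : Type} (d : X -> X -> R) (x : nat -> X)
  (eps : nat -> R) (Heps : forall j, 0 < eps j) (Hx : cofinally_BQC d x) :
  exists N : nat -> nat -> Prop, forall j,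
    infinite_nat (N j) /\
    (forall a b, N j a -> N j b -> eps_chain d (eps j) (x a) (x b)).
Proof.
  apply (choice (fun j N => infinite_nat N /\
    (forall a b, N a -> N b -> eps_chain d (eps j) (x a) (x b)))).
  intro j; exact (Hx _ (Heps j)).
Qed.

Theorem mainTheorem3 (X : Type) (d : X -> X -> R) (Hd : is_metric X d)
  (x : nat -> X)
  (Hdistinct : forall n m : nat, x n = x m -> n = m)
  (Hx : cofinally_BQC d x) :
  exists M : nat -> (nat -> Prop),
    (forall j k : nat, (1 <= j)%nat -> (1 <= k)%nat -> j <> k ->
       forall n : nat, ~ (M j n /\ M k n)) /\
    (forall j : nat, (1 <= j)%nat -> infinite_nat (M j)) /\
    (forall j : nat, (1 <= j)%nat ->
       forall i l : nat, M j i -> M j l ->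
         eps_chain d (1 / INR j) (x i) (x l)).
Proof.
  set (eps := fun j => 1 / INR (Nat.max 1 j)).
  assert (Heps : forall j, 0 < eps j).
  { intro j; apply Rdiv_lt_0_compat; [lra | apply lt_0_INR; lia]. }
  destruct (cofinally_BQC_chain_sets d x eps Heps Hx) as [N HN].
  destruct (disjoint_infinite_refinement N (fun j => proj1 (HN j)))
    as [M [Hdisj [Hinf Hsub]]].
  exists M; split; [|split].
  - intros j k _ _; apply Hdisj.
  - intros j _; apply Hinf.
  - intros j Hj i l Hi Hl.
    replace (1 / INR j) with (eps j)
      by (unfold eps; rewrite Nat.max_r by exact Hj; reflexivity).
    apply (proj2 (HN j)); apply Hsub; assumption.
Qed.
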